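(* Let $G=(V,E,\gamma,c)$ be a typed DAG task with $M_s\ge1$ cores of each type $s\in S$, and let $\pi=(\tau_1,\dots,\tau_k)$ be a complete path of $G$. Define $\delta(\tau_i,s)$, $\varphi(\tau_i)$ and $\mathcal{R}(\tau_i)$ as in the context. Then \[ \mathcal{R}(\tau_k)=len(\pi)+\sum_{s\in S}\sum_{v\in\mathrm{ivs}(\pi,s)}\frac{c(v)}{M_s}. \]
   Context: A typed DAG task is $G=(V,E,\gamma,c)$ where $(V,E)$ is a finite directed acyclic graph with a unique source $v_{src}$ and a unique sink $v_{snk}$, $S$ is a finite set of core types, $\gamma:V\to S$ gives the type of each vertex, and $c:V\to\mathbb{R}_{\ge0}$ gives the WCET of each vertex. A complete path is a path from $v_{src}$ to $v_{snk}$; $len(\pi)=\sum_{u\in\pi}c(u)$. $\mathrm{ans}(u)$, $\mathrm{des}(u)$ denote ancestors and descendants of $u$. For $v\in V$, $\mathrm{par}(v)=\{u\in V: u\ne v,\ \gamma(u)=\gamma(v),\ u\notin \mathrm{ans}(v)\cup\mathrm{des}(v)\}$, and $\mathrm{par}(\bot)=\emptyset$. For a path $\pi=(\tau_1,\dots,\tau_k)$ and $s\in S$, $\mathrm{ivs}(\pi,s)=\bigcup_{i:\gamma(\tau_i)=s}\mathrm{par}(\tau_i)$. For $s\in S$: $\delta(\tau_i,s)=\tau_i$ if $\gamma(\tau_i)=s$; $\delta(\tau_1,s)=\bot$ if $\gamma(\tau_1)\ne s$; $\delta(\tau_i,s)=\delta(\tau_{i-1},s)$ if $\gamma(\tau_i)\ne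 s$ and $2\le i\le k$ (so $\delta(\tau_i,s)$ is the last vertex of type $s$ among $\tau_1,\dots,\tau_i$, or $\bot$ if none). For $2\le i\le k$, $\varphi(\tau_i)=\mathrm{par}(\tau_i)\setminus\mathrm{par}(\delta(\tau_{i-1},\gamma(\tau_i)))$. Finally $\mathcal{R}(\tau_1)=c(\tau_1)$ and, for $2\le i\le k$, $\mathcal{R}(\tau_i)=\mathcal{R}(\tau_{i-1})+c(\tau_i)+\sum_{v\in\varphi(\tau_i)}c(v)/M_{\gamma(\tau_i)}$. *)

From mathcomp Require Import all_boot all_order all_algebra.
Set Implicit Arguments. Unset Strict Implicit. Unset Printing Implicit Defensive.
Import Order.TTheory GRing.Theory Num.Theory.
Local Open Scope ring_scope.

Section TypedDAG.
Variables (R : realFieldType) (V S : finType) (E : rel V)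
          (gamma : V -> S) (c : V -> R) (M : S -> nat).

Definition acyclic : Prop := forall u v, E u v -> ~~ connect E v u.

Definition is_source (v : V) : bool := [forall u, ~~ E u v].
Definition is_sink (v : V) : bool := [forall u, ~~ E v u].

Definition ans (u : V) : {set V} := [set w | (w != u) && connect E w u].
Definition des (u : V) : {set V} := [set w | (w != u) && connect E u w].

Definition par (v : V) : {set V} :=
  [set u | [&& u != v, gamma u == gamma v & u \notin ans v :|: des v]].

(* par on V ∪ {⊥}, ⊥ encoded as None *)
Definition par_opt (o : option V) : {set V} :=
  if o is Some v then par v else set0.

Definition ivs (p : seq V) (s : S) : {set V} :=
  \bigcup_(x <- p | gamma x == s) par x.

(* last vertex of type s in the sequence q, or ⊥ (None).
   delta(tau_i, s) = last_of_type (take i p) s. *)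
Definition last_of_type (q : seq V) (s : S) : option V :=
  foldl (fun acc v => if gamma v == s then Some v else acc) None q.

Definition len (p : seq V) : R := \sum_(u <- p) c u.

Definition complete_path (src snk : V) (p : seq V) : Prop :=
  exists rest, p = src :: rest /\ path E src rest /\ last src rest = snk.

Section Path.
Variables (x0 : V) (p : seq V).
(* tau_i (1-based) is nth x0 p (i-1) *)
(* phi(tau_{i'+1}) for 1 <= i' : par(tau_{i'+1}) \ par(delta(tau_{i'}, gamma tau_{i'+1})) *)
Definition phi (i' : nat) : {set V} :=
  par (nth x0 p i') :\: par_opt (last_of_type (take i' p) (gamma (nth x0 p i'))).

(* Rt i = R(tau_i) for 1 <= i <= size p *)
Fixpoint Rt (i : nat) : R :=
  match i with
  | 0 => 0
  | i'.+1 =>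
      if i' is 0 then c (nth x0 p 0)
      else Rt i' + c (nth x0 p i')
           + \sum_(v in phi i') c v / (M (gamma (nth x0 p i')))%:R
  end.
End Path.

End TypedDAG.

From mathcomp Require Import all_boot all_order all_algebra.
Import Order.TTheory GRing.Theory Num.Theory.
Set Implicit Arguments. Unset Strict Implicit. Unset Printing Implicit Defensive.
Local Open Scope ring_scope.

(* Write pi_i for the prefix (tau_1, ..., tau_i).  Since par(src) is empty
   (the source reaches every vertex), it suffices to show that appending tau_i
   adds to ivs(pi_(i-1), gamma tau_i) exactly the set phi(tau_i), disjoint
   from it, and leaves ivs unchanged for the other types.  A path is totally
   ordered by reachability, and par is convex for it: a vertex parallel to two
   vertices y ->* x of the same type is parallel to every vertex z of that
   type with y ->* z ->* x.  Hence par(tau_i) meets the earlier par(tau_j) of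
   its type only inside par(delta(tau_(i-1), gamma tau_i)), which is already
   in ivs. *)

Section Parallelism.
Variables (V S : finType) (E : rel V) (gamma : V -> S).

Lemma last_of_type_rcons q x s :
  last_of_type gamma (rcons q x) s =
  if gamma x == s then Some x else last_of_type gamma q s.
Proof. by rewrite /last_of_type foldl_rcons. Qed.

Lemma last_of_type_Some {q s z} :
  last_of_type gamma q s = Some z -> z \in q /\ gamma z = s.
Proof.
elim/last_ind: q => [|q w IHq] //; rewrite last_of_type_rcons mem_rcons inE.
case: eqP => [<- [<-]|_ /IHq [zq <-]]; first by rewrite eqxx.
by rewrite zq orbT.
Qed.

Lemma last_of_type_None {q s y} :
  last_of_type gamma q s = None -> y \in q -> gamma y != s.
Proof.
elim/last_ind: q => [|q w IHq] //; rewrite last_of_type_rcons mem_rcons inE.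
by case: eqP => [//|/eqP wNs /IHq yqNs /orP [/eqP ->|/yqNs]].
Qed.

Lemma connect_last_of_type {q y z} :
  pairwise (connect E) q -> y \in q ->
  last_of_type gamma q (gamma y) = Some z -> connect E y z.
Proof.
elim/last_ind: q => [|q w IHq] //.
rewrite pairwise_rcons last_of_type_rcons mem_rcons inE => /andP [qw pw_q] yqw.
have [gwy [<-]|gwNy lastq] := eqVneq (gamma w) (gamma y).
  by case/orP: yqw => [/eqP ->|yq]; [exact: connect0 | exact: (allP qw)].
case/orP: yqw => [/eqP yw|yq]; last exact: IHq.
by rewrite yw eqxx in gwNy.
Qed.

Lemma par_between {y z x v} :
  connect E y z -> connect E z x -> gamma y = gamma z ->
  v \in par E gamma y -> v \in par E gamma x -> v \in par E gamma z.
Proof.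
move=> yz zx gyz; rewrite !inE -gyz.
case/and3P=> vNy -> /norP [_ Ndes_y]; case/and3P=> vNx _ /norP [Nans_x _].
have vNz : v != z by apply: contraNneq Ndes_y => vz; rewrite vNy vz.
rewrite vNz /=; apply/norP; split.
  by apply: contra Nans_x => vz; rewrite vNx (connect_trans vz zx).
by apply: contra Ndes_y => zv; rewrite vNy (connect_trans yz zv).
Qed.

Lemma unique_source_connect src :
  acyclic E -> [set v | is_source E v] = [set src] -> forall v, connect E src v.
Proof.
move=> acyc sources v.
have [u uv minu] :=
  @arg_minnP _ v (connect E ^~ v) (fun u => #|[set w | connect E w u]|) (connect0 _ v).
suff : u \in [set v | is_source E v] by rewrite sources inE => /eqP <-.
(* u has the fewest ancestors among the ancestors of v; a predecessor w of u
   would have strictly fewer, since u is not an ancestor of w. *)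
rewrite inE; apply/forallP => w; apply/negP => wu.
have := minu w (connect_trans (connect1 wu) uv); apply/negP; rewrite -ltnNge.
apply: proper_card; apply/properP; split.
  by apply/subsetP => t; rewrite !inE => tw; apply: connect_trans tw (connect1 wu).
by exists u; rewrite inE ?connect0 ?acyc.
Qed.

Lemma par_unique_source src :
  acyclic E -> [set v | is_source E v] = [set src] -> par E gamma src = set0.
Proof.
move=> acyc sources; apply/setP => v; rewrite !inE.
rewrite (unique_source_connect acyc sources v) andbT.
by case: (v != src); rewrite ?orbT ?andbF.
Qed.

Lemma ivsP q s v :
  reflect (exists2 y, y \in q & (gamma y == s) && (v \in par E gamma y))
          (v \in ivs E gamma q s).
Proof.
rewrite /ivs -big_filter bigcup_seq.
apply: (iffP bigcupP) => [[y]|[y yq /andP [ys vy]]].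
  by rewrite mem_filter => /andP [ys yq] vy; exists y; rewrite ?ys.
by exists y; rewrite ?mem_filter ?ys.
Qed.

Lemma ivs_rcons q x s :
  ivs E gamma (rcons q x) s =
  ivs E gamma q s :|: (if gamma x == s then par E gamma x else set0).
Proof.
by rewrite /ivs -cats1 big_cat big_cons big_nil /=; case: ifP; rewrite ?setU0.
Qed.

Definition par_new q x : {set V} :=
  par E gamma x :\: par_opt E gamma (last_of_type gamma q (gamma x)).

Lemma ivs_rcons_par_new q x :
  ivs E gamma (rcons q x) (gamma x) = ivs E gamma q (gamma x) :|: par_new q x.
Proof.
have last_sub :
    par_opt E gamma (last_of_type gamma q (gamma x)) \subset ivs E gamma q (gamma x).
  case lastq: last_of_type => [z|] /=; last exact: sub0set.
  have [zq gz] := last_of_type_Some lastq.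
  by apply/subsetP => v vz; apply/ivsP; exists z; rewrite ?gz ?eqxx.
rewrite ivs_rcons eqxx /par_new; apply/setP => v; rewrite !inE.
case: (boolP (v \in ivs E gamma q (gamma x))) => //= vNivs.
by rewrite (contraNN (subsetP last_sub v) vNivs).
Qed.

Lemma disjoint_ivs_par_new q x :
  pairwise (connect E) (rcons q x) ->
  [disjoint ivs E gamma q (gamma x) & par_new q x].
Proof.
rewrite pairwise_rcons => /andP [to_x pw_q].
rewrite -setI_eq0; apply/eqP/setP => v; rewrite in_set0 in_setI in_setD.
apply/and3P => -[/ivsP [y yq /andP [/eqP gyx vy]] vNlast vx].
case lastq: last_of_type vNlast => [z|] /=; last first.
  by move: (last_of_type_None lastq yq); rewrite gyx eqxx.
rewrite -gyx in lastq; have [zq gzy] := last_of_type_Some lastq.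
have yz := connect_last_of_type pw_q yq lastq.
by rewrite (par_between yz (allP to_x z zq) (esym gzy) vy vx).
Qed.

End Parallelism.

Section Response.
Variables (R : realFieldType) (V S : finType) (E : rel V)
          (gamma : V -> S) (c : V -> R) (M : S -> nat).

Definition ivs_weight (q : seq V) : R :=
  \sum_(s : S) \sum_(v in ivs E gamma q s) c v / (M s)%:R.

Lemma ivs_weight_rcons q x :
  pairwise (connect E) (rcons q x) ->
  ivs_weight (rcons q x) =
  ivs_weight q + \sum_(v in par_new E gamma q x) c v / (M (gamma x))%:R.
Proof.
move=> pw; rewrite /ivs_weight (bigD1 (gamma x)) //=.
rewrite [in X in _ = X + _](bigD1 (gamma x)) //=.
have -> : \sum_(s | s != gamma x) \sum_(v in ivs E gamma (rcons q x) s) c v / (M s)%:R =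
          \sum_(s | s != gamma x) \sum_(v in ivs E gamma q s) c v / (M s)%:R.
  by apply: eq_bigr => s /negPf sNx; rewrite ivs_rcons eq_sym sNx setU0.
rewrite ivs_rcons_par_new (eq_bigl [predU ivs E gamma q (gamma x) & par_new E gamma q x]).
  by rewrite bigU ?disjoint_ivs_par_new // addrAC.
by move=> v; rewrite !inE.
Qed.

Lemma RtS x0 p k :
  Rt E gamma c M x0 p k.+2 =
  Rt E gamma c M x0 p k.+1 + c (nth x0 p k.+1) +
  \sum_(v in par_new E gamma (take k.+1 p) (nth x0 p k.+1))
    c v / (M (gamma (nth x0 p k.+1)))%:R.
Proof. by []. Qed.

Lemma Rt_prefix x0 p :
  pairwise (connect E) p -> par E gamma (nth x0 p 0) = set0 ->
  forall k, (k < size p)%N ->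
  Rt E gamma c M x0 p k.+1 = len c (take k.+1 p) + ivs_weight (take k.+1 p).
Proof.
move=> pw par_head; elim=> [|k IHk] ltk.
  rewrite (take_nth x0) // take0 /= /len big_seq1 /ivs_weight big1 ?addr0 // => s _.
  by rewrite /ivs big_cons big_nil par_head setU0 if_same big_set0.
have prefix_k2 : take k.+2 p = rcons (take k.+1 p) (nth x0 p k.+1).
  by rewrite (take_nth x0).
have pw_k2 : pairwise (connect E) (rcons (take k.+1 p) (nth x0 p k.+1)).
  by move: pw; rewrite -prefix_k2 -{1}(cat_take_drop k.+2 p) pairwise_cat => /and3P [].
rewrite RtS IHk 1?ltnW // prefix_k2 ivs_weight_rcons //.
by rewrite /len -cats1 big_cat big_seq1 addrACA !addrA.
Qed.

End Response.

Lemma complete_path_pairwise (V : finType) (E : rel V) src snk p :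
  complete_path E src snk p -> pairwise (connect E) p.
Proof.
case=> rest [-> [pth _]]; rewrite -sorted_pairwise; last exact: connect_trans.
by apply: sub_path pth => a b; apply: connect1.
Qed.

Theorem lemma3 (R : realFieldType) (V S : finType) (E : rel V)
    (gamma : V -> S) (c : V -> R) (M : S -> nat) (src snk : V) (p : seq V) :
  acyclic E ->
  [set v | is_source E v] = [set src] ->
  [set v | is_sink E v] = [set snk] ->
  (forall v, 0 <= c v) ->
  (forall s, (1 <= M s)%N) ->
  complete_path E src snk p ->
  Rt E gamma c M src p (size p) =
    len c p + \sum_(s : S) \sum_(v in ivs E gamma p s) c v / (M s)%:R.
Proof.
move=> acyc sources _ _ _ cp.
have [rest [p_def _]] := cp.
have head_p : nth src p 0 = src by rewrite p_def.
have size_p : size p = (size p).-1.+1 by rewrite p_def.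
rewrite size_p (Rt_prefix c M (complete_path_pairwise cp)) -?size_p ?take_size //.
by rewrite head_p (par_unique_source gamma acyc sources).
Qed.
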